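(* Let $p\ge 2$ and let $\alpha,\beta>0$ be reals with $$\alpha\beta\ <\ \frac{2p}{\lceil \log_2 p\rceil+2}.$$ Then there exists an in-tree task graph $T$ in the Pebble Game model such that no schedule $S$ of $T$ on $p$ processors satisfies both $C_{\max}(S)\le\alpha\,C^*_p(T)$ and $M(S)\le \beta\, M^*_p(T)$. Consequently, no algorithm is both an $\alpha(p)$-approximation for makespan minimization and a $\beta(p)$-approximation for peak memory minimization on $p$ processors with $\alpha(p)\beta(p)<2p/(\lceil\log_2 p\rceil+2)$.
   Context: Model. An in-tree task graph $T$ has nodes $\{1,\dots,n\}$ and a root; every non-root node $i$ has a parent, and $\mathrm{Children}(i)$ is the set of children of $i$. Each node $i$ has a processing time $w_i\ge 0$, an execution-file size $n_i\ge 0$ and an output-file size $f_i\ge 0$. A schedule on $p$ identical processors assigns each node $i$ a processor and a start time $\sigma_i\ge 0$; node $i$ runs without preemption during $[\sigma_i,\sigma_i+w_i)$, a processor runs at most one node at a time, and a node may start only after all its children have completed. The makespan is $C_{\max}=\max_i(\sigma_i+w_i)$. Memory: the output file of $i$ (size $f_i$) occupies memory from the start of $i$ until the completion of the parent of $i$ (for the root, until the end of the schedule), and the execution file of $i$ occupies memory while $i$ runs. The memory used at time $t$ is the total size of files present at time $t$; the peak memory $M(S)$ is the supremum over $t$ of the memory used. $C^*_p(T)$ denotes the minimum makespan and $M^*_p(T)$ the minimum peak memory over all schedules of $T$ on $p$ processors. The Pebble Game model is the special case $f_i=1$, $w_i=1$, $n_i=0$ for all $i$. *)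

From Stdlib Require Import Reals List Arith.
Import ListNotations.
Open Scope R_scope.

Record InTree := {
  size : nat;
  root : nat;
  parent : nat -> nat;
  root_lt : (root < size)%nat;
  parent_lt : forall i, (i < size)%nat -> i <> root -> (parent i < size)%nat;
  reaches_root : forall i, (i < size)%nat -> exists k, Nat.iter k parent i = root
}.

Definition is_child (T : InTree) (j i : nat) : Prop :=
  (j < size T)%nat /\ j <> root T /\ parent T j = i.

(* Node weights: processing time w, execution-file size nf, output-file size f. *)
Record Weights := { w : nat -> R; nf : nat -> R; f : nat -> R }.

Definition pebble : Weights := {| w := fun _ => 1; nf := fun _ => 0; f := fun _ => 1 |}.

Record Schedule := { proc : nat -> nat; sigma : nat -> R }.

Definition in_int (a b t : R) : Prop := a <= t /\ t < b.
Definition ind (a b t : R) : R :=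
  if Rle_dec a t then (if Rlt_dec t b then 1 else 0) else 0.

Definition ValidSchedule (T : InTree) (W : Weights) (p : nat) (S : Schedule) : Prop :=
  (forall i, (i < size T)%nat -> 0 <= sigma S i /\ (proc S i < p)%nat) /\
  (forall i j, (i < size T)%nat -> (j < size T)%nat -> i <> j ->
     proc S i = proc S j ->
     ~ (exists t, in_int (sigma S i) (sigma S i + w W i) t /\
                  in_int (sigma S j) (sigma S j + w W j) t)) /\
  (forall i j, (i < size T)%nat -> is_child T j i ->
     sigma S j + w W j <= sigma S i).

Definition Cmax (T : InTree) (W : Weights) (S : Schedule) : R :=
  fold_right Rmax 0 (map (fun i => sigma S i + w W i) (seq 0 (size T))).

Definition mem (T : InTree) (W : Weights) (S : Schedule) (t : R) : R :=
  fold_right Rplus 0 (map (fun i =>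
     f W i * ind (sigma S i)
                 (if Nat.eq_dec i (root T) then Cmax T W S
                  else sigma S (parent T i) + w W (parent T i)) t
     + nf W i * ind (sigma S i) (sigma S i + w W i) t)
   (seq 0 (size T))).

Definition PeakMem (T : InTree) (W : Weights) (S : Schedule) (m : R) : Prop :=
  is_lub (fun y => exists t, y = mem T W S t) m.

Definition MinMakespan (T : InTree) (W : Weights) (p : nat) (c : R) : Prop :=
  (exists S, ValidSchedule T W p S /\ Cmax T W S = c) /\
  (forall S, ValidSchedule T W p S -> c <= Cmax T W S).

Definition MinPeakMem (T : InTree) (W : Weights) (p : nat) (m : R) : Prop :=
  (exists S, ValidSchedule T W p S /\ PeakMem T W S m) /\
  (forall S ms, ValidSchedule T W p S -> PeakMem T W S ms -> m <= ms).

From Pilot Require Import Defs.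
From Stdlib Require Import Reals List Arith Lia Lra ZArith.
Import ListNotations.
Open Scope R_scope.

(* The witness is a caterpillar: a spine of p nodes ending in the root, where
   spine node a has as children spine node a - 1 and the top of a chain of L
   nodes.  Running all chains in parallel gives the optimal makespan L + p, and
   running the nodes one after the other gives the optimal peak memory 3.  In
   the Pebble Game every non-root file stays in memory for at least two time
   units, so every schedule satisfies 2 (n - 1) <= (C_max + 1) M, n = p (L + 1).
   With C_max <= alpha (L + p) and M <= 3 beta this fails for large L as soon as
   3 alpha beta < 2 p, which is implied by alpha beta < 2 p / (ceil(log2 p) + 2). *)

Definition sumR (l : list nat) (g : nat -> R) : R := fold_right Rplus 0 (map g l).

Lemma sumR_cons a l g : sumR (a :: l) g = g a + sumR l g.
Proof. reflexivity. Qed.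

Lemma sumR_ext_in l g h : (forall x, In x l -> g x = h x) -> sumR l g = sumR l h.
Proof.
  induction l as [|a l IH]; intros Hgh; [reflexivity|].
  rewrite !sumR_cons, Hgh, IH; [reflexivity| |left; reflexivity].
  intros x Hx; apply Hgh; right; exact Hx.
Qed.

Lemma sumR_le l g h : (forall x, In x l -> g x <= h x) -> sumR l g <= sumR l h.
Proof.
  induction l as [|a l IH]; intros Hgh; [apply Rle_refl|].
  rewrite !sumR_cons. apply Rplus_le_compat.
  - apply Hgh; left; reflexivity.
  - apply IH. intros x Hx; apply Hgh; right; exact Hx.
Qed.

Lemma sumR_const l c : sumR l (fun _ => c) = INR (length l) * c.
Proof.
  induction l as [|a l IH]; [unfold sumR; simpl; ring|].
  rewrite sumR_cons, IH, length_cons, S_INR. ring.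
Qed.

Lemma sumR_nonneg l g : (forall x, In x l -> 0 <= g x) -> 0 <= sumR l g.
Proof.
  intros Hg. apply Rle_trans with (sumR l (fun _ => 0)); [|now apply sumR_le].
  rewrite sumR_const; lra.
Qed.

Lemma sumR_plus l g h : sumR l (fun x => g x + h x) = sumR l g + sumR l h.
Proof. induction l as [|a l IH]; [unfold sumR; simpl; ring|]. rewrite !sumR_cons, IH; ring. Qed.

Lemma sumR_comm l1 l2 (g : nat -> nat -> R) :
  sumR l1 (fun k => sumR l2 (fun q => g q k)) = sumR l2 (fun q => sumR l1 (g q)).
Proof.
  induction l1 as [|a l1 IH].
  - symmetry. rewrite (sumR_ext_in l2 _ (fun _ => 0)), sumR_const by reflexivity.
    unfold sumR; simpl; ring.
  - rewrite sumR_cons, IH, <- sumR_plus. apply sumR_ext_in; reflexivity.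
Qed.

Lemma sumR_pick l g a : NoDup l -> In a l ->
  sumR l g = g a + sumR l (fun x => if Nat.eq_dec x a then 0 else g x).
Proof.
  induction l as [|b l IH]; intros Hnd Ha; [destruct Ha|].
  inversion Hnd as [|? ? Hb Hnd']; subst. rewrite !sumR_cons.
  destruct (Nat.eq_dec b a) as [->|Hba].
  - rewrite (sumR_ext_in l (fun x => if Nat.eq_dec x a then 0 else g x) g).
    + destruct (Nat.eq_dec a a); [ring|contradiction].
    + intros x Hx. destruct (Nat.eq_dec x a); [subst; contradiction|reflexivity].
  - destruct Ha as [Ha|Ha]; [contradiction|]. rewrite (IH Hnd' Ha). ring.
Qed.

Lemma sumR_seq_except n r c : (r < n)%nat ->
  sumR (seq 0 n) (fun i => if Nat.eq_dec i r then 0 else c) = INR (n - 1) * c.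
Proof.
  intros Hr. pose proof (sumR_pick _ (fun _ => c) r (seq_NoDup n 0)) as Hpick.
  rewrite sumR_const, length_seq in Hpick. specialize (Hpick ltac:(apply in_seq; lia)).
  rewrite minus_INR by lia. simpl. lra.
Qed.

Lemma sumR_incl l' l g : NoDup l' -> NoDup l -> incl l' l ->
  (forall x, In x l -> 0 <= g x) -> sumR l' g <= sumR l g.
Proof.
  intros Hnd'. revert g. induction Hnd' as [|a l' Ha Hnd' IH]; intros g Hnd Hincl Hg.
  - now apply sumR_nonneg.
  - assert (Hal : In a l) by (apply Hincl; left; reflexivity).
    rewrite (sumR_pick l g a Hnd Hal), sumR_cons.
    apply Rplus_le_compat_l.
    rewrite (sumR_ext_in l' g (fun x => if Nat.eq_dec x a then 0 else g x)).
    + apply IH; auto.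
      * intros x Hx; apply Hincl; right; exact Hx.
      * intros x Hx. destruct (Nat.eq_dec x a); [lra|auto].
    + intros x Hx. destruct (Nat.eq_dec x a); [subst; contradiction|reflexivity].
Qed.

Lemma sumR_le_1_single_support l g : NoDup l -> (forall x, In x l -> 0 <= g x <= 1) ->
  (forall x y, In x l -> In y l -> g x <> 0 -> g y <> 0 -> x = y) -> sumR l g <= 1.
Proof.
  induction l as [|a l IH]; intros Hnd Hg Hsupp; [unfold sumR; simpl; lra|].
  inversion Hnd as [|? ? Ha Hnd']; subst. rewrite sumR_cons.
  destruct (Req_dec (g a) 0) as [Ea|Ea].
  - rewrite Ea, Rplus_0_l. apply IH; auto.
    + intros x Hx; apply Hg; right; exact Hx.
    + intros x y Hx Hy; apply Hsupp; right; assumption.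
  - rewrite (sumR_ext_in l g (fun _ => 0)), sumR_const.
    + assert (g a <= 1) by (apply Hg; left; reflexivity). lra.
    + intros x Hx. destruct (Req_dec (g x) 0) as [Ex|Ex]; [exact Ex|].
      assert (x = a) by (apply Hsupp; [right|left|..]; auto). subst; contradiction.
Qed.

Lemma fold_Rmax_ge (G : nat -> R) l x : In x l -> G x <= fold_right Rmax 0 (map G l).
Proof.
  induction l as [|a l IH]; intros Hx; [destruct Hx|]. simpl.
  destruct Hx as [->|Hx]; [apply Rmax_l|].
  eapply Rle_trans; [apply IH, Hx|apply Rmax_r].
Qed.

Lemma fold_Rmax_le (G : nat -> R) l c : 0 <= c -> (forall x, In x l -> G x <= c) ->
  fold_right Rmax 0 (map G l) <= c.
Proof.
  induction l as [|a l IH]; intros Hc HG; simpl; [exact Hc|].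
  apply Rmax_lub; [apply HG; left; reflexivity|apply IH; auto].
  intros x Hx; apply HG; right; exact Hx.
Qed.

Lemma ind_range a b t : 0 <= Defs.ind a b t <= 1.
Proof. unfold Defs.ind. destruct (Rle_dec a t), (Rlt_dec t b); lra. Qed.

Lemma ind_neq0 a b t : Defs.ind a b t <> 0 -> a <= t < b.
Proof. unfold Defs.ind. destruct (Rle_dec a t), (Rlt_dec t b); intros; lra. Qed.

Lemma ind_1 a b t : a <= t < b -> Defs.ind a b t = 1.
Proof. unfold Defs.ind. destruct (Rle_dec a t), (Rlt_dec t b); lra. Qed.

Lemma ind_split3 a e t :
  Defs.ind a e t <= Defs.ind a (a + 1) t + Defs.ind (a + 1) (a + 2) t + Defs.ind (a + 2) e t.
Proof. unfold Defs.ind. repeat (destruct Rle_dec || destruct Rlt_dec); lra. Qed.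

Lemma INR_unit_interval_inj (a b : nat) (x : R) :
  INR a <= x < INR a + 1 -> INR b <= x < INR b + 1 -> a = b.
Proof.
  intros Ha Hb.
  assert (a < S b)%nat by (apply INR_lt; rewrite S_INR; lra).
  assert (b < S a)%nat by (apply INR_lt; rewrite S_INR; lra). lia.
Qed.

(* [1 - up (- t)] is the ceiling of [t]. *)
Lemma nat_ceil_ex (t : R) : 0 <= t -> exists k : nat, t <= INR k < t + 1.
Proof.
  intros Ht. destruct (archimed (- t)) as [H1 H2].
  assert (Hk : (0 <= 1 - up (- t))%Z) by (apply le_IZR; rewrite minus_IZR; simpl; lra).
  exists (Z.to_nat (1 - up (- t))).
  rewrite INR_IZR_INZ, Z2Nat.id, minus_IZR by exact Hk. simpl. lra.
Qed.

Lemma nat_gt_ex (x : R) : exists n : nat, (1 <= n)%nat /\ x < INR n.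
Proof.
  destruct (nat_ceil_ex (Rabs x)) as [k Hk]; [apply Rabs_pos|].
  exists (S k). split; [lia|]. rewrite S_INR. pose proof (Rle_abs x). lra.
Qed.

Lemma sumR_unit_windows_le_1 n c t :
  sumR (seq 0 n) (fun q => Defs.ind (INR q + c) (INR q + c + 1) t) <= 1.
Proof.
  apply sumR_le_1_single_support; [apply seq_NoDup|intros; apply ind_range|].
  intros x y _ _ Hx Hy. apply ind_neq0 in Hx, Hy.
  apply (INR_unit_interval_inj x y (t - c)); lra.
Qed.

Definition file_live (T : InTree) (S : Schedule) (t : R) (i : nat) : R :=
  Defs.ind (Defs.sigma S i)
    (if Nat.eq_dec i (root T) then Cmax T pebble S else Defs.sigma S (parent T i) + 1) t.

Lemma mem_pebble T S t : mem T pebble S t = sumR (seq 0 (size T)) (file_live T S t).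
Proof. unfold mem, sumR. f_equal. apply map_ext. intros i. unfold file_live. simpl. ring. Qed.

Lemma mem_nonneg T S t : 0 <= mem T pebble S t.
Proof. rewrite mem_pebble. apply sumR_nonneg. intros; apply ind_range. Qed.

Lemma PeakMem_ge_mem T S ms t : PeakMem T pebble S ms -> mem T pebble S t <= ms.
Proof. intros [Hub _]. apply Hub. exists t; reflexivity. Qed.

Lemma PeakMem_nonneg T S ms : PeakMem T pebble S ms -> 0 <= ms.
Proof.
  intros Hpk. apply Rle_trans with (mem T pebble S 0); [apply mem_nonneg|].
  apply PeakMem_ge_mem, Hpk.
Qed.

Lemma Cmax_ge_end T S i : (i < size T)%nat -> Defs.sigma S i + 1 <= Cmax T pebble S.
Proof.
  intros Hi. apply (fold_Rmax_ge (fun i => Defs.sigma S i + w pebble i)), in_seq. lia.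
Qed.

Lemma Cmax_nonneg T S : 0 <= Cmax T pebble S.
Proof.
  unfold Cmax. induction (map _ _) as [|x l IH]; simpl; [lra|].
  apply Rle_trans with (1 := IH), Rmax_r.
Qed.

Lemma valid_integer_schedule (T : InTree) (p : nat) (pr s : nat -> nat) :
  (forall i, (i < size T)%nat -> (pr i < p)%nat) ->
  (forall i j, (i < size T)%nat -> (j < size T)%nat -> i <> j -> pr i = pr j -> s i <> s j) ->
  (forall i, (i < size T)%nat -> i <> root T -> (s i < s (parent T i))%nat) ->
  ValidSchedule T pebble p {| proc := pr; Defs.sigma := fun i => INR (s i) |}.
Proof.
  intros Hproc Hexcl Hprec. split; [|split]; simpl.
  - intros i Hi. split; [apply pos_INR|auto].
  - intros i j Hi Hj Hij Hpr [t [Hti Htj]].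
    apply (Hexcl i j Hi Hj Hij Hpr), (INR_unit_interval_inj _ _ t); [exact Hti|exact Htj].
  - intros i j Hi [Hj [Hjr <-]]. rewrite <- S_INR. apply le_INR, Hprec; assumption.
Qed.

Section ValidPebbleSchedule.

Variables (T : InTree) (p : nat) (sched : Schedule).
Hypothesis HS : ValidSchedule T pebble p sched.

Lemma start_nonneg i : (i < size T)%nat -> 0 <= Defs.sigma sched i.
Proof. intros Hi. apply HS, Hi. Qed.

Lemma start_parent_ge i : (i < size T)%nat -> i <> root T ->
  Defs.sigma sched i + 1 <= Defs.sigma sched (parent T i).
Proof.
  intros Hi Hr. destruct HS as [_ [_ Hprec]].
  apply (Hprec (parent T i) i); [apply parent_lt|split]; auto.
Qed.

Lemma mem_root_start_ge_3 c1 c2 :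
  (c1 < size T)%nat -> (c2 < size T)%nat -> c1 <> c2 -> c1 <> root T -> c2 <> root T ->
  parent T c1 = root T -> parent T c2 = root T ->
  3 <= mem T pebble sched (Defs.sigma sched (root T)).
Proof.
  intros H1 H2 H12 H1r H2r P1 P2. pose proof (root_lt T) as Hr.
  set (t := Defs.sigma sched (root T)).
  assert (Hlive : forall c, (c < size T)%nat -> c <> root T -> parent T c = root T ->
                  file_live T sched t c = 1).
  { intros c Hc Hcr Pc. unfold file_live. destruct (Nat.eq_dec c (root T)); [contradiction|].
    pose proof (start_parent_ge c Hc Hcr). rewrite Pc in *. apply ind_1. unfold t; lra. }
  assert (Hroot : file_live T sched t (root T) = 1).
  { unfold file_live. destruct (Nat.eq_dec (root T) (root T)); [|contradiction].
    pose proof (Cmax_ge_end T sched (root T) Hr). apply ind_1. unfold t; lra. }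
  rewrite mem_pebble.
  replace 3 with (sumR [root T; c1; c2] (file_live T sched t))
    by (rewrite !sumR_cons, Hroot, !Hlive by assumption; unfold sumR; simpl; ring).
  apply sumR_incl.
  - repeat constructor; simpl; intuition congruence.
  - apply seq_NoDup.
  - intros x Hx. apply in_seq. simpl in Hx. intuition (subst; lia).
  - intros; apply ind_range.
Qed.

Lemma file_live_two_samples i K :
  (i < size T)%nat -> i <> root T -> Cmax T pebble sched <= INR K ->
  2 <= sumR (seq 0 K) (fun k => file_live T sched (INR k) i).
Proof.
  intros Hi Hr HK.
  pose proof (start_parent_ge i Hi Hr).
  pose proof (Cmax_ge_end T sched (parent T i) (parent_lt T i Hi Hr)).
  destruct (nat_ceil_ex _ (start_nonneg i Hi)) as [k Hk].
  assert (HkK : (S k < K)%nat) by (apply INR_lt; rewrite S_INR; lra).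
  assert (Hlive : forall j, (k <= j <= S k)%nat -> file_live T sched (INR j) i = 1).
  { intros j Hj. unfold file_live. destruct (Nat.eq_dec i (root T)); [contradiction|].
    apply ind_1. destruct (Nat.eq_dec j k) as [->|Hjk]; [lra|].
    replace j with (S k) by lia. rewrite S_INR. lra. }
  replace 2 with (sumR [k; S k] (fun j => file_live T sched (INR j) i))
    by (rewrite !sumR_cons, !Hlive by lia; unfold sumR; simpl; ring).
  apply sumR_incl.
  - repeat constructor; simpl; lia.
  - apply seq_NoDup.
  - intros x Hx. apply in_seq. simpl in Hx. intuition (subst; lia).
  - intros; apply ind_range.
Qed.

(* Sampling the memory at the integer times 0, 1, ..., ceil Cmax - 1 sees every
   non-root file at least twice. *)
Lemma pebble_area_bound ms : PeakMem T pebble sched ms ->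
  2 * INR (size T - 1) <= (Cmax T pebble sched + 1) * ms.
Proof.
  intros Hpk. destruct (nat_ceil_ex _ (Cmax_nonneg T sched)) as [K HK].
  apply Rle_trans with (INR K * ms).
  2: { apply Rmult_le_compat_r; [apply (PeakMem_nonneg _ _ _ Hpk)|lra]. }
  rewrite <- (length_seq K 0), <- sumR_const.
  apply Rle_trans with (sumR (seq 0 K) (fun k => mem T pebble sched (INR k)));
    [|apply sumR_le; intros; apply PeakMem_ge_mem, Hpk].
  rewrite (sumR_ext_in _ _ (fun k => sumR (seq 0 (size T)) (fun i => file_live T sched (INR k) i)))
    by (intros; apply mem_pebble).
  rewrite (sumR_comm (seq 0 K) (seq 0 (size T)) (fun i k => file_live T sched (INR k) i)).
  apply Rle_trans with (sumR (seq 0 (size T)) (fun i => if Nat.eq_dec i (root T) then 0 else 2)).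
  - rewrite sumR_seq_except by apply root_lt. lra.
  - apply sumR_le. intros i Hi. apply in_seq in Hi.
    destruct (Nat.eq_dec i (root T)) as [->|Hir].
    + apply sumR_nonneg. intros; apply ind_range.
    + apply file_live_two_samples; [lia|assumption|lra].
Qed.

End ValidPebbleSchedule.

Section Caterpillar.

Variables L p : nat.
Hypothesis Hp : (1 <= p)%nat.

(* Node a (L + 1) + b, with b <= L, is the b-th node of the chain below spine
   node a if b < L, and spine node a itself if b = L. *)
Definition cat_parent (q : nat) : nat :=
  if q mod (L + 1) =? L then q + (L + 1) else q + 1.

Definition cat_root : nat := p * (L + 1) - 1.

Lemma node_decomp q : exists a b, (b <= L)%nat /\ q = (a * (L + 1) + b)%nat.
Proof.
  exists (q / (L + 1))%nat, (q mod (L + 1))%nat.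
  pose proof (Nat.div_mod q (L + 1) ltac:(lia)).
  pose proof (Nat.mod_upper_bound q (L + 1) ltac:(lia)). lia.
Qed.

Lemma node_mod a b : (b <= L)%nat -> ((a * (L + 1) + b) mod (L + 1) = b)%nat.
Proof. intros. symmetry. apply (Nat.mod_unique _ _ a); lia. Qed.

Lemma node_div a b : (b <= L)%nat -> ((a * (L + 1) + b) / (L + 1) = a)%nat.
Proof. intros. symmetry. apply (Nat.div_unique _ _ _ b); lia. Qed.

Lemma cat_parent_spine a : cat_parent (a * (L + 1) + L) = ((a + 1) * (L + 1) + L)%nat.
Proof. unfold cat_parent. rewrite node_mod, Nat.eqb_refl; lia. Qed.

Lemma cat_parent_chain a b : (b < L)%nat ->
  cat_parent (a * (L + 1) + b) = (a * (L + 1) + (b + 1))%nat.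
Proof.
  intros Hb. unfold cat_parent. rewrite node_mod by lia.
  destruct (Nat.eqb_spec b L); lia.
Qed.

Lemma cat_parent_gt q : (q < cat_parent q)%nat.
Proof. unfold cat_parent. destruct (_ =? _); lia. Qed.

Lemma cat_root_spine : cat_root = ((p - 1) * (L + 1) + L)%nat.
Proof. unfold cat_root. destruct p as [|p']; [lia|]. nia. Qed.

Lemma cat_root_lt : (cat_root < p * (L + 1))%nat.
Proof. rewrite cat_root_spine. nia. Qed.

Lemma cat_parent_lt q : (q < p * (L + 1))%nat -> q <> cat_root ->
  (cat_parent q < p * (L + 1))%nat.
Proof.
  rewrite cat_root_spine. intros Hq Hr. destruct (node_decomp q) as (a & b & Hb & ->).
  assert (a < p)%nat by nia.
  destruct (Nat.eq_dec b L) as [->|HbL].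
  - rewrite cat_parent_spine. assert (a <> p - 1)%nat by (intros ->; contradiction). nia.
  - rewrite cat_parent_chain by lia. nia.
Qed.

Lemma cat_reaches_root q : (q < p * (L + 1))%nat ->
  exists k, Nat.iter k cat_parent q = cat_root.
Proof.
  remember (p * (L + 1) - q)%nat as d eqn:Hd. revert q Hd.
  induction d as [d IH] using lt_wf_ind. intros q Hd Hq.
  destruct (Nat.eq_dec q cat_root) as [->|Hr]; [exists 0%nat; reflexivity|].
  pose proof (cat_parent_lt q Hq Hr). pose proof (cat_parent_gt q).
  destruct (IH (p * (L + 1) - cat_parent q)%nat ltac:(lia) _ eq_refl) as [k Hk]; [lia|].
  exists (S k). rewrite Nat.iter_succ_r. exact Hk.
Qed.

Definition caterpillar : InTree := {|
  size := p * (L + 1); root := cat_root; parent := cat_parent;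
  root_lt := cat_root_lt;
  parent_lt := cat_parent_lt;
  reaches_root := cat_reaches_root |}.

(* Processor [a] runs the chain below spine node [a] during [0, L); processor 0
   then runs the spine. *)
Definition par_proc (q : nat) : nat := if q mod (L + 1) =? L then 0 else q / (L + 1).
Definition par_start (q : nat) : nat :=
  if q mod (L + 1) =? L then L + q / (L + 1) else q mod (L + 1).

Definition parallel_schedule : Schedule :=
  {| proc := par_proc; Defs.sigma := fun q => INR (par_start q) |}.

Lemma par_spine a :
  par_proc (a * (L + 1) + L) = 0%nat /\ par_start (a * (L + 1) + L) = (L + a)%nat.
Proof. unfold par_proc, par_start. rewrite node_mod, node_div, Nat.eqb_refl; auto. Qed.

Lemma par_chain a b : (b < L)%nat ->
  par_proc (a * (L + 1) + b) = a /\ par_start (a * (L + 1) + b) = b.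
Proof.
  intros Hb. unfold par_proc, par_start. rewrite node_mod, node_div by lia.
  destruct (Nat.eqb_spec b L); [lia|auto].
Qed.

Lemma parallel_valid : ValidSchedule caterpillar pebble p parallel_schedule.
Proof.
  apply valid_integer_schedule; simpl.
  - intros q Hq. destruct (node_decomp q) as (a & b & Hb & ->).
    destruct (Nat.eq_dec b L) as [->|HbL].
    + rewrite (proj1 (par_spine a)). lia.
    + rewrite (proj1 (par_chain a b ltac:(lia))). nia.
  - intros i j _ _ Hij. destruct (node_decomp i) as (a & b & Hb & ->).
    destruct (node_decomp j) as (c & d & Hd & ->).
    destruct (Nat.eq_dec b L) as [->|HbL]; [destruct (par_spine a) as [-> ->]
      |destruct (par_chain a b ltac:(lia)) as [-> ->]];
    (destruct (Nat.eq_dec d L) as [->|HdL]; [destruct (par_spine c) as [-> ->]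
      |destruct (par_chain c d ltac:(lia)) as [-> ->]]); lia.
  - intros q Hq Hr. destruct (node_decomp q) as (a & b & Hb & ->).
    destruct (Nat.eq_dec b L) as [->|HbL].
    + rewrite cat_parent_spine, (proj2 (par_spine a)), (proj2 (par_spine (a + 1))). lia.
    + rewrite cat_parent_chain, (proj2 (par_chain a b ltac:(lia))) by lia.
      destruct (Nat.eq_dec (b + 1) L) as [Hb1|Hb1].
      * rewrite Hb1, (proj2 (par_spine a)). lia.
      * rewrite (proj2 (par_chain a (b + 1) ltac:(lia))). lia.
Qed.

Lemma parallel_Cmax : Cmax caterpillar pebble parallel_schedule = INR (L + p).
Proof.
  apply Rle_antisym.
  - apply fold_Rmax_le; [apply pos_INR|]. intros q Hq. apply in_seq in Hq. simpl in Hq |- *.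
    rewrite <- S_INR. apply le_INR. destruct (node_decomp q) as (a & b & Hb & ->).
    assert (a < p)%nat by nia.
    destruct (Nat.eq_dec b L) as [->|HbL].
    + rewrite (proj2 (par_spine a)). lia.
    + rewrite (proj2 (par_chain a b ltac:(lia))). lia.
  - pose proof (Cmax_ge_end caterpillar parallel_schedule cat_root cat_root_lt) as Hroot.
    simpl in Hroot. rewrite cat_root_spine, (proj2 (par_spine (p - 1))), <- S_INR in Hroot.
    replace (L + p)%nat with (S (L + (p - 1))) by lia. exact Hroot.
Qed.

Lemma cat_spine_start_ge sch : ValidSchedule caterpillar pebble p sch ->
  forall a, (a < p)%nat -> INR (L + a) <= Defs.sigma sch (a * (L + 1) + L).
Proof.
  intros Hsch. pose proof cat_root_spine.
  assert (Hchain : forall b, (b <= L)%nat -> INR b <= Defs.sigma sch b).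
  { induction b as [|b IH]; intros Hb.
    - apply (start_nonneg _ _ _ Hsch). simpl. nia.
    - pose proof (cat_parent_chain 0 b ltac:(lia)) as Hpar. simpl in Hpar.
      pose proof (start_parent_ge _ _ _ Hsch b ltac:(simpl; nia) ltac:(simpl; nia)) as Hstep.
      simpl in Hstep. rewrite Hpar in Hstep.
      rewrite <- Nat.add_1_r, plus_INR. pose proof (IH ltac:(lia)). simpl. lra. }
  induction a as [|a IH]; intros Ha.
  - rewrite Nat.add_0_r. apply Hchain. lia.
  - pose proof (start_parent_ge _ _ _ Hsch (a * (L + 1) + L) ltac:(simpl; nia) ltac:(simpl; nia))
      as Hstep.
    simpl in Hstep. rewrite cat_parent_spine in Hstep.
    pose proof (IH ltac:(lia)). rewrite <- Nat.add_1_r, Nat.add_assoc, plus_INR. simpl. lra.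
Qed.

Lemma caterpillar_min_makespan : MinMakespan caterpillar pebble p (INR (L + p)).
Proof.
  split.
  - exists parallel_schedule. split; [apply parallel_valid|apply parallel_Cmax].
  - intros sch Hsch. pose proof (Cmax_ge_end caterpillar sch cat_root cat_root_lt) as Hroot.
    pose proof (cat_spine_start_ge sch Hsch (p - 1) ltac:(lia)). simpl in Hroot.
    rewrite cat_root_spine in Hroot. replace (L + p)%nat with (S (L + (p - 1))) by lia.
    rewrite S_INR. lra.
Qed.

Definition sequential_schedule : Schedule := {| proc := fun _ => 0%nat; Defs.sigma := INR |}.

Lemma sequential_valid : ValidSchedule caterpillar pebble p sequential_schedule.
Proof.
  apply (valid_integer_schedule _ _ _ (fun q => q)); simpl.
  - lia.
  - auto.
  - intros q _ _. apply cat_parent_gt.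
Qed.

Lemma sequential_Cmax_le : Cmax caterpillar pebble sequential_schedule <= INR (p * (L + 1)).
Proof.
  apply fold_Rmax_le; [apply pos_INR|]. intros q Hq. apply in_seq in Hq. simpl in Hq |- *.
  rewrite <- S_INR. apply le_INR. lia.
Qed.

(* Only a spine node keeps its file for longer than two time units, and it does so
   during the [L] time units in which the next chain is processed. *)
Lemma sequential_long_lived q t : (q < p * (L + 1))%nat ->
  Defs.ind (INR q + 2) (if Nat.eq_dec q cat_root
                        then Cmax caterpillar pebble sequential_schedule
                        else INR (cat_parent q) + 1) t <> 0 ->
  exists a, q = (a * (L + 1) + L)%nat /\ INR q + 2 <= t < INR q + INR L + 2.
Proof.
  intros Hq Hlive. apply ind_neq0 in Hlive.
  destruct (Nat.eq_dec q cat_root) as [->|Hr].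
  - pose proof sequential_Cmax_le. unfold cat_root in Hlive.
    rewrite minus_INR in Hlive by nia. simpl in Hlive. lra.
  - destruct (node_decomp q) as (a & b & Hb & ->). exists a.
    destruct (Nat.eq_dec b L) as [->|HbL].
    + split; [reflexivity|]. rewrite cat_parent_spine in Hlive.
      repeat rewrite ?plus_INR, ?mult_INR in *. simpl in *. lra.
    + exfalso. rewrite cat_parent_chain in Hlive by lia.
      rewrite !plus_INR in Hlive. simpl in Hlive. lra.
Qed.

Lemma sequential_mem_le_3 t : mem caterpillar pebble sequential_schedule t <= 3.
Proof.
  rewrite mem_pebble. simpl size.
  set (E := fun q => if Nat.eq_dec q cat_root then Cmax caterpillar pebble sequential_schedule
                     else INR (cat_parent q) + 1).
  apply Rle_trans with (sumR (seq 0 (p * (L + 1))) (fun q =>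
    Defs.ind (INR q + 0) (INR q + 0 + 1) t + Defs.ind (INR q + 1) (INR q + 1 + 1) t
    + Defs.ind (INR q + 2) (E q) t)).
  { apply sumR_le. intros q _. rewrite Rplus_0_r.
    replace (INR q + 1 + 1) with (INR q + 2) by ring. apply ind_split3. }
  rewrite !sumR_plus.
  pose proof (sumR_unit_windows_le_1 (p * (L + 1)) 0 t).
  pose proof (sumR_unit_windows_le_1 (p * (L + 1)) 1 t).
  assert (sumR (seq 0 (p * (L + 1))) (fun q => Defs.ind (INR q + 2) (E q) t) <= 1).
  { apply sumR_le_1_single_support; [apply seq_NoDup|intros; apply ind_range|].
    intros x y Hx Hy Hlx Hly. apply in_seq in Hx, Hy.
    destruct (sequential_long_lived x t ltac:(lia) Hlx) as (a & -> & Hta).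
    destruct (sequential_long_lived y t ltac:(lia) Hly) as (c & -> & Htc).
    assert (Hxy : (a * (L + 1) + L < c * (L + 1) + L + L)%nat)
      by (apply INR_lt; rewrite !plus_INR in *; lra).
    assert (Hyx : (c * (L + 1) + L < a * (L + 1) + L + L)%nat)
      by (apply INR_lt; rewrite !plus_INR in *; lra).
    assert (a = c) as -> by nia. reflexivity. }
  lra.
Qed.

Lemma caterpillar_mem_ge_3 sch : (2 <= p)%nat -> (1 <= L)%nat ->
  ValidSchedule caterpillar pebble p sch ->
  3 <= mem caterpillar pebble sch (Defs.sigma sch (root caterpillar)).
Proof.
  intros Hp2 HL Hsch. pose proof cat_root_spine.
  apply (mem_root_start_ge_3 _ _ _ Hsch ((p - 1) * (L + 1) + (L - 1)) ((p - 2) * (L + 1) + L));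
    simpl; try nia.
  - rewrite cat_parent_chain by lia. lia.
  - rewrite cat_parent_spine. replace (p - 2 + 1)%nat with (p - 1)%nat by lia. lia.
Qed.

Lemma caterpillar_min_peak_mem : (2 <= p)%nat -> (1 <= L)%nat ->
  MinPeakMem caterpillar pebble p 3.
Proof.
  intros Hp2 HL. split.
  - exists sequential_schedule. split; [apply sequential_valid|split].
    + intros m [t ->]. apply sequential_mem_le_3.
    + intros m Hm. apply Rle_trans with (1 := caterpillar_mem_ge_3 _ Hp2 HL sequential_valid).
      apply Hm. eexists; reflexivity.
  - intros sch ms Hsch Hpk. apply Rle_trans with (1 := caterpillar_mem_ge_3 _ Hp2 HL Hsch).
    apply PeakMem_ge_mem, Hpk.
Qed.

End Caterpillar.

Lemma long_chains_exist (p : nat) (alpha beta : R) :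
  (1 <= p)%nat -> 0 < alpha -> 0 < beta -> 3 * (alpha * beta) < 2 * INR p ->
  exists L : nat, (1 <= L)%nat /\
    (alpha * INR (L + p) + 1) * (3 * beta) < 2 * INR (p * (L + 1) - 1).
Proof.
  intros Hp Ha Hb Hab. set (D := 2 * INR p - 3 * (alpha * beta)).
  destruct (nat_gt_ex ((3 * (alpha * beta) * INR p + 3 * beta + 2) / D)) as [L [HL HLD]].
  exists L. split; [exact HL|].
  apply (Rmult_lt_compat_r D) in HLD; [|unfold D; lra].
  rewrite <- Rmult_div_swap, Rmult_div_l in HLD by (unfold D; lra).
  assert (1 <= INR p) by (apply (le_INR 1); exact Hp).
  rewrite minus_INR by nia. rewrite mult_INR, !plus_INR. simpl. unfold D in HLD. nra.
Qed.

Theorem theorem3 (p : nat) (alpha beta : R) :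
  (2 <= p)%nat -> 0 < alpha -> 0 < beta ->
  alpha * beta < 2 * INR p / (INR (Nat.log2_up p) + 2) ->
  exists (T : InTree) (cstar mstar : R),
    MinMakespan T pebble p cstar /\ MinPeakMem T pebble p mstar /\
    forall S : Schedule, ValidSchedule T pebble p S ->
      forall ms : R, PeakMem T pebble S ms ->
        ~ (Cmax T pebble S <= alpha * cstar /\ ms <= beta * mstar).
Proof.
  intros Hp Ha Hb Hab.
  assert (Hlog : 1 <= INR (Nat.log2_up p)) by (apply (le_INR 1), Nat.log2_up_pos; lia).
  assert (Hab3 : 3 * (alpha * beta) < 2 * INR p).
  { apply (Rmult_lt_compat_r (INR (Nat.log2_up p) + 2)) in Hab; [|lra].
    rewrite <- Rmult_div_swap, Rmult_div_l in Hab by lra.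
    assert (0 < alpha * beta) by (apply Rmult_lt_0_compat; assumption). nra. }
  assert (Hp1 : (1 <= p)%nat) by lia.
  destruct (long_chains_exist p alpha beta Hp1 Ha Hb Hab3) as [L [HL Hbound]].
  exists (caterpillar L p Hp1), (INR (L + p)), 3.
  split; [apply caterpillar_min_makespan|split; [apply caterpillar_min_peak_mem; assumption|]].
  intros S HS ms Hpk [HC Hms].
  pose proof (pebble_area_bound _ _ _ HS ms Hpk) as Harea. simpl size in Harea.
  pose proof (Cmax_nonneg (caterpillar L p Hp1) S). pose proof (PeakMem_nonneg _ _ _ Hpk).
  assert ((Cmax (caterpillar L p Hp1) pebble S + 1) * ms <= (alpha * INR (L + p) + 1) * (3 * beta))
    by (apply Rmult_le_compat; lra).
  lra.
Qed.
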